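(* Let $F_1,\dots,F_n$ be fields, $R=F_1\times\cdots\times F_n$, and let $A=\{(x_1,\dots,x_n)\in W^*(R): x_i\in\{0,1\}\text{ for all }i\}$. Then $\omega(\Gamma'(R)[A])=\omega(\Gamma'(R))$ and $\chi(\Gamma'(R)[A])=\chi(\Gamma'(R))$.
   Context: All rings are commutative with identity. $W^*(R)$ denotes the set of non-zero non-unit elements of $R$. The cozero-divisor graph $\Gamma'(R)$ is the simple graph with vertex set $W^*(R)$, in which distinct $a,b$ are adjacent iff $a\notin Rb$ and $b\notin Ra$. For a vertex subset $A$, $\Gamma'(R)[A]$ denotes the induced subgraph on $A$. $\omega$ and $\chi$ denote clique number and chromatic number. *)

From HB Require Import structures.
From mathcomp Require Import all_boot all_algebra.
Set Implicit Arguments. Unset Strict Implicit. Unset Printing Implicit Defensive.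
Import GRing.Theory.
Local Open Scope ring_scope.

Section ProdRing.
Variables (n : nat) (F : 'I_n -> fieldType).

Definition prodR : Type := forall i : 'I_n, F i.
Definition pzero : prodR := fun i => 0.
Definition pone : prodR := fun i => 1.
Definition pmul (a b : prodR) : prodR := fun i => a i * b i.

Definition punit (a : prodR) : Prop := exists b : prodR, pmul a b = pone.
Definition Wstar (a : prodR) : Prop := a <> pzero /\ ~ punit a.
Definition in_principal (a b : prodR) : Prop := exists r : prodR, a = pmul r b.
Definition cozero_adj (a b : prodR) : Prop :=
  a <> b /\ ~ in_principal a b /\ ~ in_principal b a.
Definition setA (a : prodR) : Prop :=
  Wstar a /\ forall i, a i = 0 \/ a i = 1.
End ProdRing.

Section Graphs.
Variables (T : Type) (V : T -> Prop) (adj : T -> T -> Prop).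

Definition induced (B : T -> Prop) : T -> Prop := fun x => V x /\ B x.

Definition has_clique (k : nat) : Prop :=
  exists f : 'I_k -> T, injective f /\ (forall i, V (f i)) /\
    (forall i j, i <> j -> adj (f i) (f j)).

Definition clique_number (k : nat) : Prop :=
  has_clique k /\ forall m, has_clique m -> (m <= k)%N.

Definition colorable (k : nat) : Prop :=
  exists c : T -> 'I_k, forall x y, V x -> V y -> adj x y -> c x <> c y.

Definition chromatic_number (k : nat) : Prop :=
  colorable k /\ forall m, colorable m -> (k <= m)%N.
End Graphs.

From mathcomp Require Import all_boot all_algebra.
From Stdlib Require Import FunctionalExtensionality Classical.
Import GRing.Theory.
Set Implicit Arguments. Unset Strict Implicit.
Local Open Scope ring_scope.

(* In a product of fields, a \in Rb holds exactly when every zero coordinate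
   of b is a zero coordinate of a, so the adjacency of Gamma'(R) only depends
   on the zero patterns of its endpoints.  Replacing each coordinate of x by 0
   or 1 according to whether it vanishes therefore maps W^*(R) onto A and is a
   graph homomorphism of Gamma'(R) onto its induced subgraph on A.  Such a
   retraction transports cliques and colourings in both directions. *)

Section InducedRetract.
Variables (T : Type) (V B : T -> Prop) (adj : T -> T -> Prop) (g : T -> T).
Hypothesis adj_irrefl : forall x, ~ adj x x.
Hypothesis retract_induced : forall x, V x -> induced V B (g x).
Hypothesis retract_adj : forall x y, adj x y -> adj (g x) (g y).

Lemma has_clique_induced k : has_clique (induced V B) adj k <-> has_clique V adj k.
Proof.
split=> [[f [f_inj [fV fadj]]] | [f [_ [fV fadj]]]].
  by exists f; split=> //; split=> // i; case: (fV i).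
exists (g \o f); split; last split=> [i|i j ij]; last by apply/retract_adj/fadj.
  move=> i j /= gij; case: (eqVneq i j) => // /eqP /fadj /retract_adj.
  by rewrite gij => /adj_irrefl.
exact/retract_induced/fV.
Qed.

Lemma colorable_induced k : colorable (induced V B) adj k <-> colorable V adj k.
Proof.
split=> [[c c_ok] | [c c_ok]].
  exists (c \o g) => x y Vx Vy /retract_adj.
  exact: c_ok (retract_induced Vx) (retract_induced Vy).
by exists c => x y [Vx _] [Vy _]; apply: c_ok.
Qed.

Lemma clique_number_induced k :
  clique_number (induced V B) adj k <-> clique_number V adj k.
Proof.
by rewrite /clique_number has_clique_induced;
  split=> -[? max_k]; split=> // m /has_clique_induced /max_k.
Qed.

Lemma chromatic_number_induced k :
  chromatic_number (induced V B) adj k <-> chromatic_number V adj k.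
Proof.
by rewrite /chromatic_number colorable_induced;
  split=> -[? min_k]; split=> // m /colorable_induced /min_k.
Qed.

End InducedRetract.

Section ProductOfFields.
Variables (n : nat) (F : 'I_n -> fieldType).
Local Notation R := (@prodR n F).

Lemma in_principalP (a b : R) : in_principal a b <-> forall i, b i = 0 -> a i = 0.
Proof.
split=> [[r ->] i | a_vanish]; first by rewrite /pmul => ->; rewrite mulr0.
exists (fun i => if b i == 0 then 0 else a i / b i).
apply: functional_extensionality_dep => i; rewrite /pmul.
by case: eqP => [bi0 | /eqP /divfK //]; rewrite bi0 a_vanish // mulr0.
Qed.

Lemma punitP (a : R) : punit a <-> forall i, a i <> 0.
Proof.
split=> [[b ab1] i ai0 | a_nz].
  move: (congr1 (fun f => f i) ab1); rewrite /pmul /pone ai0 mul0r.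
  by move/esym/eqP; rewrite oner_eq0.
exists (fun i => (a i)^-1); apply: functional_extensionality_dep => i.
by rewrite /pmul /pone divff //; apply/eqP/a_nz.
Qed.

Lemma nonzeroP (a : R) : a <> @pzero n F <-> exists i, a i <> 0.
Proof.
split=> [a_nz | [i ai_nz] a0]; last by rewrite a0 in ai_nz.
apply: NNPP => a_zero; apply: a_nz; apply: functional_extensionality_dep => i.
by apply: NNPP => ai_nz; apply: a_zero; exists i.
Qed.

Definition support_indicator (x : R) : R := fun i => if x i == 0 then 0 else 1.

Lemma support_indicator_eq0 (x : R) i : support_indicator x i = 0 <-> x i = 0.
Proof.
rewrite /support_indicator; case: eqP => // xi_nz.
by split=> // /eqP; rewrite oner_eq0.
Qed.

Lemma Wstar_same_zeros (a b : R) :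
  (forall i, a i = 0 <-> b i = 0) -> Wstar a -> Wstar b.
Proof.
move=> same [/nonzeroP [i ai_nz] a_nunit]; split.
  by apply/nonzeroP; exists i => /same.
by move/punitP => b_nz; apply/a_nunit/punitP => j /same /b_nz.
Qed.

Lemma Wstar_support_indicator (x : R) : Wstar (support_indicator x) <-> Wstar x.
Proof.
by split; apply: Wstar_same_zeros => i; [|symmetry]; apply: support_indicator_eq0.
Qed.

Lemma in_principal_support_indicator (a b : R) :
  in_principal (support_indicator a) (support_indicator b) <-> in_principal a b.
Proof.
rewrite !in_principalP; split=> ab i.
  by move=> /support_indicator_eq0 /ab /support_indicator_eq0.
by move=> /support_indicator_eq0 /ab /support_indicator_eq0.
Qed.

Lemma cozero_adj_irrefl (a : R) : ~ cozero_adj a a.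
Proof. by case. Qed.

Lemma cozero_adj_support_indicator (a b : R) :
  cozero_adj a b -> cozero_adj (support_indicator a) (support_indicator b).
Proof.
move=> [_ [nab nba]]; rewrite /cozero_adj !in_principal_support_indicator.
split=> // eq_ind; apply: nab; rewrite -in_principal_support_indicator eq_ind.
exact/in_principalP.
Qed.

Lemma setA_support_indicator (x : R) :
  Wstar x -> induced (@Wstar n F) (@setA n F) (support_indicator x).
Proof.
move=> Wx; have WIx : Wstar (support_indicator x) by apply/Wstar_support_indicator.
by do !split=> //; rewrite /support_indicator => i; case: eqP; [left | right].
Qed.

End ProductOfFields.

Theorem mainTheorem11 (n : nat) (F : 'I_n -> fieldType) :
  (forall k : nat,
      clique_number (induced (@Wstar n F) (@setA n F)) (@cozero_adj n F) k
      <-> clique_number (@Wstar n F) (@cozero_adj n F) k) /\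
  (forall k : nat,
      chromatic_number (induced (@Wstar n F) (@setA n F)) (@cozero_adj n F) k
      <-> chromatic_number (@Wstar n F) (@cozero_adj n F) k).
Proof.
have irrefl := @cozero_adj_irrefl n F.
have retract := @setA_support_indicator n F.
have hom := @cozero_adj_support_indicator n F.
split=> k; [exact: clique_number_induced irrefl retract hom k |
            exact: chromatic_number_induced retract hom k].
Qed.
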